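(* Let $n\ge 1$ and let $U\in\mathbb{C}^{n\times n}$ be unitary. Write $U=A+iB$ with $A,B\in\mathbb{R}^{n\times n}$, and define the real matrix \[ M=\begin{bmatrix} A & -B\\ B & A\end{bmatrix}\in\mathbb{R}^{2n\times 2n}. \] Let $M=Z\Sigma Z^{-1}$ be an eigendecomposition of $M$, where $Z\in\mathbb{C}^{2n\times 2n}$ is invertible and $\Sigma\in\mathbb{C}^{2n\times 2n}$ is diagonal. For each eigenvalue $\mu\in\sigma(M)$, let $Z_\mu\in\mathbb{C}^{2n\times m_M(\mu)}$ be the matrix formed by those columns of $Z$ whose corresponding diagonal entry of $\Sigma$ equals $\mu$. Let $L=[\,I_n\quad iI_n\,]\in\mathbb{C}^{n\times 2n}$, so that $L\begin{bmatrix}z^{(1)}\\ z^{(2)}\end{bmatrix}=z^{(1)}+iz^{(2)}$ for $z^{(1)},z^{(2)}\in\mathbb{C}^n$, and define $X_\mu:=LZ_\mu\in\mathbb{C}^{n\times m_M(\mu)}$. Then $\operatorname{rank}(X_\mu)=m_U(\mu)$, and whenever $m_U(\mu)>0$, the column space of $X_\mu$ equals the eigenspace $\ker(U-\mu I_n)$ of $U$ associated with $\mu$.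
   Context: $\sigma(\cdot)$ denotes the spectrum (set of eigenvalues) of a matrix. Since $M$ and $U$ are normal, algebraic and geometric multiplicities coincide; $m_M(\mu)$ and $m_U(\mu)$ denote the multiplicity of $\mu$ as an eigenvalue of $M$ and of $U$ respectively, with the convention $m_U(\mu)=0$ if $\mu\notin\sigma(U)$. *)

From HB Require Import structures.
From mathcomp Require Import all_boot all_order all_algebra.
Set Implicit Arguments. Unset Strict Implicit. Unset Printing Implicit Defensive.
Import Order.TTheory GRing.Theory Num.Theory.
Local Open Scope ring_scope.

Section Defs.
Variable C : numClosedFieldType.

Definition ctrmx m n (U : 'M[C]_(m, n)) : 'M[C]_(n, m) := (map_mx Num.conj U)^T.
Definition unitary n (U : 'M[C]_n) : Prop := U *m ctrmx U = 1%:M.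

Definition ReM n (U : 'M[C]_n) : 'M[C]_n := map_mx (fun z => 'Re z) U.
Definition ImM n (U : 'M[C]_n) : 'M[C]_n := map_mx (fun z => 'Im z) U.

Definition realify n (U : 'M[C]_n) : 'M[C]_(n + n) :=
  block_mx (ReM U) (- ImM U) (ImM U) (ReM U).

Definition Lmx n : 'M[C]_(n, n + n) := row_mx 1%:M ('i *: 1%:M).

Definition eigendecomp m (M Z : 'M[C]_m) (d : 'rV[C]_m) : Prop :=
  Z \in unitmx /\ M = Z *m diag_mx d *m invmx Z.

(* indices j with Sigma_jj = mu; its cardinality is m_M(mu) *)
Definition eig_idx m (d : 'rV[C]_m) (mu : C) : {set 'I_m} := [set j | d 0 j == mu].

Definition Zsub m (Z : 'M[C]_m) (d : 'rV[C]_m) (mu : C) : 'M[C]_(m, #|eig_idx d mu|) :=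
  colsub (@enum_val _ (mem (eig_idx d mu))) Z.

Definition in_spectrum n (U : 'M[C]_n) (mu : C) : Prop := root (char_poly U) mu.

(* m_U(mu): multiplicity of mu as eigenvalue (root of the characteristic poly);
   0 when mu is not an eigenvalue *)
Definition eig_mult n (U : 'M[C]_n) (mu : C) : nat := mup mu (char_poly U).

(* column space of X equals ker(U - mu I) (column vectors): expressed through
   row spaces of transposes *)
Definition colspace_eq_ker n k (X : 'M[C]_(n, k)) (U : 'M[C]_n) (mu : C) : bool :=
  (X^T == kermx (U - mu%:M)^T)%MS.

End Defs.

From HB Require Import structures.
From mathcomp Require Import all_boot all_order all_algebra.
From mathcomp Require Import ring.
Set Implicit Arguments. Unset Strict Implicit. Unset Printing Implicit Defensive.
Import Order.TTheory GRing.Theory Num.Theory.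
Local Open Scope ring_scope.

(* The map L intertwines M and U (L M = U L), and its right inverse L^* / 2
   intertwines them the other way (M L^*/2 = L^*/2 U); hence L maps the
   mu-eigenspace of M onto that of U.  The columns of Z_mu span the
   mu-eigenspace of M, so X_mu = L Z_mu spans ker (U - mu I), and its rank is
   the geometric multiplicity of mu for U.  As U is unitary, it is normal, hence
   unitarily diagonalizable, so geometric and algebraic multiplicities agree. *)

Lemma char_poly_conj (R : comUnitRingType) n (P A : 'M[R]_n) : P \in unitmx ->
  char_poly (invmx P *m A *m P) = char_poly A.
Proof.
move=> P_unit; rewrite /char_poly.
have -> : char_poly_mx (invmx P *m A *m P) =
    map_mx polyC (invmx P) *m char_poly_mx A *m map_mx polyC P.
  rewrite /char_poly_mx mulmxBr mulmxBl !map_mxM; congr (_ - _).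
  by rewrite mul_mx_scalar -scalemxAl -map_mxM mulVmx // map_mx1 scalemx1.
by rewrite !det_mulmx mulrAC -det_mulmx -map_mxM mulVmx // map_mx1 det1 mul1r.
Qed.

Lemma rank_diag_mx (F : fieldType) n (c : 'rV[F]_n) :
  \rank (diag_mx c) = #|[set i | c 0 i != 0]|.
Proof.
rewrite -sum1dep_card big_mkcond /=.
elim: n c => [|n IHn] c; first by rewrite big_ord0 flatmx0 mxrank0.
have -> : diag_mx c = diag_mx (row_mx (@lsubmx _ 1 1 n c) (rsubmx (c : 'rV_(1 + n)))).
  by rewrite hsubmxK.
rewrite diag_mx_row big_ord_recl.
rewrite (rank_diag_block_mx (diag_mx (@lsubmx F 1 1 n c)) (diag_mx (@rsubmx F 1 1 n c))).
have lshift0 : lshift n (0 : 'I_1) = 0 by apply: val_inj.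
congr (_ + _)%N; last first.
  rewrite IHn; apply: eq_bigr => i _; rewrite mxE.
  by congr (if c 0 _ != 0 then _ else _); apply: val_inj.
rewrite rank_rV; have -> : (diag_mx (@lsubmx F 1 1 n c) == 0) = (c 0 0 == 0).
  apply/eqP/eqP => [/matrixP/(_ 0 0)|c00]; first by rewrite !mxE eqxx mulr1n lshift0.
  by apply/matrixP => i j; rewrite !ord1 !mxE eqxx mulr1n lshift0 c00.
by case: eqP.
Qed.

Lemma row_free_rowsub (F : fieldType) m m' n (f : 'I_m' -> 'I_m) (B : 'M[F]_(m, n)) :
  injective f -> row_free B -> row_free (rowsub f B).
Proof.
move=> f_inj /row_freeP[B' BB']; apply/row_freeP; exists (B' *m (rowsub f 1%:M)^T).
rewrite mulmxA !mul_rowsub_mx BB' mul1mx; apply/matrixP => i j.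
by rewrite !mxE (inj_eq f_inj) eq_sym.
Qed.

Section ConjDiag.

Variables (F : fieldType) (n : nat) (P : 'M[F]_n) (d : 'rV[F]_n).
Hypothesis P_unit : P \in unitmx.

Local Notation A := (invmx P *m diag_mx d *m P).
Local Notation S a := [set j | d 0 j == a].

Lemma conj_diag_subr_scalar a :
  A - a%:M = invmx P *m diag_mx (d - const_mx a) *m P.
Proof.
rewrite linearB /= diag_const_mx mulmxBr mulmxBl; congr (_ - _).
by rewrite mul_mx_scalar -scalemxAl mulVmx // scalemx1.
Qed.

Lemma mxrank_eigenspace_conj_diag a : \rank (eigenspace A a) = #|S a|.
Proof.
rewrite mxrank_ker conj_diag_subr_scalar mxrankMfree ?row_free_unit //.
rewrite eqmxMfull ?row_full_unit ?unitmx_inv // rank_diag_mx [RHS]cardsCs card_ord.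
by congr (_ - #|pred_of_set _|)%N; apply/setP => j; rewrite !inE !mxE subr_eq0.
Qed.

Lemma mup_char_poly_conj_diag a : mup a (char_poly A) = #|S a|.
Proof.
rewrite char_poly_conj // char_poly_trig ?diag_mx_is_trig //.
rewrite -(big_map (fun i => diag_mx d i i) xpredT (fun y => 'X - y%:P)).
rewrite mu_prod_XsubC count_map cardE /enum_mem size_filter.
by apply: eq_count => j; rewrite /= !inE mxE eqxx mulr1n eq_sym.
Qed.

Lemma rowsub_conj_diag_sub_eigenspace a :
  (rowsub (@enum_val _ (mem (S a))) P <= eigenspace A a)%MS.
Proof.
apply/eigenspaceP; rewrite !mulmxA mul_rowsub_mx mulmxV // mul_rowsub_mx mul1mx.
have -> : rowsub (@enum_val _ (mem (S a))) (diag_mx d) = a *: rowsub enum_val 1%:M.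
  apply/matrixP => i j; have := enum_valP i; rewrite inE => /eqP d_i.
  by rewrite !mxE d_i mulr_natr.
by rewrite -scalemxAl mul_rowsub_mx mul1mx.
Qed.

Lemma eigenspace_conj_diag a :
  (rowsub (@enum_val _ (mem (S a))) P == eigenspace A a)%MS.
Proof.
rewrite -(mxrank_leqif_eq (rowsub_conj_diag_sub_eigenspace a)).2.
rewrite mxrank_eigenspace_conj_diag (eqP (row_free_rowsub _ _)) ?row_free_unit //.
exact: enum_val_inj.
Qed.

End ConjDiag.

Lemma eigenspace_intertwine (F : fieldType) m n (A : 'M[F]_m) (B : 'M[F]_n)
    (P : 'M[F]_(m, n)) (Q : 'M[F]_(n, m)) a :
  A *m P = P *m B -> Q *m A = B *m Q -> Q *m P = 1%:M ->
  (eigenspace A a *m P == eigenspace B a)%MS.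
Proof.
move=> AP QA QP; apply/andP; split.
  apply/eigenspaceP; rewrite -mulmxA -AP mulmxA.
  by rewrite (eigenspaceP (submx_refl _)) -scalemxAl.
rewrite -[X in (X <= _)%MS]mulmx1 -QP mulmxA submxMr //; apply/eigenspaceP.
by rewrite -mulmxA QA mulmxA (eigenspaceP (submx_refl _)) -scalemxAl.
Qed.

Lemma kermx_tr_subr_scalar (F : fieldType) n (A : 'M[F]_n) a :
  kermx (A - a%:M)^T = eigenspace A^T a.
Proof. by rewrite linearB /= tr_scalar_mx. Qed.

Lemma mxrank_eigenspace_tr (F : fieldType) n (A : 'M[F]_n) a :
  \rank (eigenspace A^T a) = \rank (eigenspace A a).
Proof. by rewrite -kermx_tr_subr_scalar !mxrank_ker mxrank_tr. Qed.

Section NumClosedField.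

Variable C : numClosedFieldType.

Lemma unitary_normalmx n (U : 'M[C]_n) : unitary U -> U \is normalmx.
Proof.
rewrite /unitary /ctrmx map_trmx => UU.
by apply/normalmxP; rewrite UU (mulmx1C UU).
Qed.

Lemma mxrank_eigenspace_normalmx n (A : 'M[C]_n) a :
  A \is normalmx -> \rank (eigenspace A a) = mup a (char_poly A).
Proof.
move/orthomx_spectralP => A_eq; rewrite A_eq.
by rewrite mxrank_eigenspace_conj_diag ?mup_char_poly_conj_diag ?spectral_unit.
Qed.

Lemma eigendecomp_Zsub m (M Z : 'M[C]_m) d mu :
  eigendecomp M Z d -> ((Zsub Z d mu)^T == eigenspace M^T mu)%MS.
Proof.
case=> Z_unit ->; rewrite /Zsub trmx_mxsub !trmx_mul tr_diag_mx trmx_inv mulmxA.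
by apply: eigenspace_conj_diag; rewrite unitmx_tr.
Qed.

(* (1/2) L^*, the Moore-Penrose inverse of [Lmx C n] *)
Definition Lpinv n : 'M[C]_(n + n, n) :=
  col_mx (2^-1 *: 1%:M) (- ('i / 2) *: 1%:M).

Lemma Lmx_realify n (U : 'M[C]_n) : Lmx C n *m realify U = U *m Lmx C n.
Proof.
rewrite /Lmx /realify mul_row_block mul_mx_row !mul1mx -!scalemxAl !mul1mx.
rewrite -scalemxAr mulmx1; congr row_mx; apply/matrixP => i j; rewrite !mxE.
  by rewrite -Crect.
rewrite [in RHS](Crect (U i j)) mulrDr mulrA -expr2 sqrCi.
by rewrite mulN1r addrC mulrC.
Qed.

Lemma realify_Lpinv n (U : 'M[C]_n) : realify U *m Lpinv n = Lpinv n *m U.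
Proof.
rewrite /Lpinv /realify mul_block_col mul_col_mx -!scalemxAr -!scalemxAl.
rewrite !mulmx1 !mul1mx; congr col_mx; apply/matrixP => i j; rewrite !mxE.
  by rewrite [in RHS](Crect (U i j)); ring.
rewrite [in RHS](Crect (U i j)).
have -> : - ('i / 2) * ('Re (U i j) + 'i * 'Im (U i j)) =
    - ('i / 2 * 'Re (U i j)) - 'i ^+ 2 / 2 * 'Im (U i j) by ring.
by rewrite sqrCi; ring.
Qed.

Lemma Lmx_Lpinv n : Lmx C n *m Lpinv n = 1%:M :> 'M[C]_n.
Proof.
rewrite /Lpinv /Lmx mul_row_col -!scalemxAr -!scalemxAl !mulmx1.
rewrite scalerA -scalerDl -[RHS]scale1r; congr (_ *: _).
by rewrite mulNr mulrAC -expr2 sqrCi mulN1r opprK [RHS]splitr mul1r.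
Qed.

End NumClosedField.

Theorem lemma2p2 (C : numClosedFieldType) (n : nat) (hn : (0 < n)%N)
    (U : 'M[C]_n) (hU : unitary U)
    (Z : 'M[C]_(n + n)) (d : 'rV[C]_(n + n))
    (hZ : eigendecomp (realify U) Z d)
    (mu : C) (hmu : in_spectrum (realify U) mu) :
  let X := @Lmx C n *m Zsub Z d mu in
  \rank X = eig_mult U mu /\
  ((0 < eig_mult U mu)%N -> colspace_eq_ker X U mu).
Proof.
move=> X.
have X_eigen : (X^T == eigenspace U^T mu)%MS.
  apply/eqmxP; rewrite /X trmx_mul.
  apply: eqmx_trans (eqmxMr _ (eqmxP (eigendecomp_Zsub mu hZ))) _.
  apply/eqmxP/(eigenspace_intertwine (Q := (Lpinv C n)^T));
    apply: (can_inj (@trmxK _ _ _)); rewrite !trmx_mul !trmxK.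
  - exact: Lmx_realify.
  - exact: realify_Lpinv.
  - by rewrite Lmx_Lpinv tr_scalar_mx.
split; last by rewrite /colspace_eq_ker kermx_tr_subr_scalar.
rewrite -mxrank_tr (eqmx_rank X_eigen) mxrank_eigenspace_tr.
exact/mxrank_eigenspace_normalmx/unitary_normalmx.
Qed.
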